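(* Let $F_1,F_2:[0,1]\to[0,1]$ be homeomorphisms and let $0<a<1$ be such that $0,a,1$ are fixed points of both $F_1$ and $F_2$, and $F_1(t)>t$ and $F_2(t)>t$ for all $t\in[0,1]\setminus\{0,a,1\}$. Let $f_1,f_2:S^1\to S^1$ be the homeomorphisms of the circle induced by $F_1,F_2$ (via the identification $S^1=[0,1]/(0\sim1)$). Then the iterated function system $\mathcal{F}=\{S^1; f_\lambda\mid \lambda\in\{1,2\}\}$ does not have the average shadowing property.
   Context: The circle $S^1$ is identified with $[0,1)$ via the covering projection $\pi:\mathbb{R}\to S^1$, $\pi(x)=x \bmod 1$, and carries the metric $d$ induced by the usual distance on the real line (arc-length distance). An iterated function system (IFS) $\mathcal{F}=\{X; f_{\lambda}\mid\lambda\in\Lambda\}$ on a metric space $(X,d)$ is a family of continuous maps $f_\lambda:X\to X$ indexed by a finite nonempty set $\Lambda$. For $\sigma=(\lambda_0,\lambda_1,\dots)\in\Lambda^{\mathbb{Z}_+}$ write $\mathcal{F}_{\sigma_n}=f_{\lambda_{n-1}}\circ\cdots\circ f_{\lambda_0}$ for $n\ge1$ and $\mathcal{F}_{\sigma_0}=\mathrm{id}_X$. For $\delta>0$, a sequence $(x_i)_{i\ge0}$ in $X$ is a $\delta$-average pseudo-orbit of $\mathcal{F}$ if there exist a natural number $N$ and $\sigma=(\lambda_0,\lambda_1,\dots)\in\Lambda^{\mathbb{Z}_+}$ such that for all $n\ge N$, $\frac1n\sum_{i=0}^{n-1}d(f_{\lambda_i}(x_i),x_{i+1})<\delta$. A sequence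 $(x_i)_{i\ge0}$ is $\epsilon$-shadowed in average by $z\in X$ if there exists $\sigma\in\Lambda^{\mathbb{Z}_+}$ with $\limsup_{n\to\infty}\frac1n\sum_{i=0}^{n-1}d(\mathcal{F}_{\sigma_i}(z),x_i)<\epsilon$. $\mathcal{F}$ has the average shadowing property if for every $\epsilon>0$ there is $\delta>0$ such that every $\delta$-average pseudo-orbit of $\mathcal{F}$ is $\epsilon$-shadowed in average by some point of $X$. *)

From HB Require Import structures.
From mathcomp Require Import all_boot all_order all_algebra.
From mathcomp Require Import all_classical all_reals all_analysis.
Set Implicit Arguments. Unset Strict Implicit. Unset Printing Implicit Defensive.
Import Order.TTheory GRing.Theory Num.Theory.
Import numFieldNormedType.Exports.
Local Open Scope ring_scope.
Local Open Scope classical_set_scope.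

Section IFS.
Variables (R : realType) (X : Type) (L : Type).
Variables (d : X -> X -> R) (f : L -> X -> X).

Fixpoint ifs_orbit (sigma : nat -> L) (z : X) (n : nat) : X :=
  if n is m.+1 then f (sigma m) (ifs_orbit sigma z m) else z.

Definition avg_pseudo_orbit (delta : R) (x : nat -> X) : Prop :=
  exists (N : nat) (sigma : nat -> L), forall n : nat, (N <= n)%N ->
    n%:R^-1 * (\sum_(i < n) d (f (sigma i) (x i)) (x i.+1)) < delta.

Definition avg_shadowed (eps : R) (x : nat -> X) (z : X) : Prop :=
  exists sigma : nat -> L,
    (limn_esup (fun n : nat =>
       (n%:R^-1 * (\sum_(i < n) d (ifs_orbit sigma z i) (x i)))%:E)
     < eps%:E)%E.

Definition average_shadowing_property : Prop :=
  forall eps : R, 0 < eps -> exists2 delta : R, 0 < delta &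
    forall x : nat -> X, avg_pseudo_orbit delta x ->
      exists z : X, avg_shadowed eps x z.
End IFS.

Section Circle.
Variable R : realType.

Definition circle : Type := {x : R | 0 <= x < 1}.

Lemma frac_in01 (x : R) : 0 <= x - (Num.floor x)%:~R < 1.
Proof.
apply/andP; split; first by rewrite subr_ge0 floor_le.
rewrite ltrBlDr addrC -[1]/(1%:~R) -intrD; exact: floorD1_gt.
Qed.

Definition circ_proj (x : R) : circle := exist (fun y : R => 0 <= y < 1) _ (frac_in01 x).

Definition circ_dist (p q : circle) : R :=
  Num.min `|sval p - sval q| (1 - `|sval p - sval q|).

Definition induced_circle_map (F : R -> R) (p : circle) : circle :=
  circ_proj (F (sval p)).

Definition homeo01 (F : R -> R) : Prop :=
  (forall t, t \in `[0, 1] -> F t \in `[0, 1]) /\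
  exists G : R -> R,
    (forall t, t \in `[0, 1] -> G t \in `[0, 1]) /\
    (forall t, t \in `[0, 1] -> G (F t) = t) /\
    (forall t, t \in `[0, 1] -> F (G t) = t) /\
    {within `[0, 1], continuous F} /\ {within `[0, 1], continuous G}.
End Circle.

From HB Require Import structures.
From mathcomp Require Import all_boot all_order all_algebra.
From mathcomp Require Import all_classical all_reals all_analysis.
From mathcomp Require Import lra zify.
Import Order.TTheory GRing.Theory Num.Theory.
Import numFieldNormedType.Exports.
Set Implicit Arguments. Unset Strict Implicit. Unset Printing Implicit Defensive.
Local Open Scope ring_scope.

(* Each map lifts to a map of [0,1) moving every point upwards, so every orbit
   of the system is nondecreasing in [0,1) and eventually stays a fixed distance
   e away from one of the common fixed points 0 and a. The sequence sitting
   alternately at a and at 0 on blocks of lengths K, 2K, 4K, ... is a genuine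
   orbit except at its logarithmically many switching times, so its average
   error is at most 1/(2K). But each block fills half of the time elapsed at
   its end, so along the blocks spent at the fixed point the orbit avoids, the
   average distance between the orbit and the sequence is at least e/2. *)

Section Circle.
Variable R : realType.

Lemma circ_proj_id (x : R) : 0 <= x < 1 -> sval (circ_proj x) = x.
Proof. by move=> x01 /=; rewrite (@floor_def _ x 0) ?subr0. Qed.

Lemma circ_dist_ge0 (p q : circle R) : 0 <= circ_dist p q.
Proof.
have /andP[x0 x1] := svalP p; have /andP[y0 y1] := svalP q.
rewrite /circ_dist le_min normr_ge0 subr_ge0.
by rewrite ler_norml; lra.
Qed.

Lemma circ_dist_le_half (p q : circle R) : circ_dist p q <= 1 / 2.
Proof. by rewrite /circ_dist ge_min; have [|] := lerP `|sval p - sval q| (1 / 2); lra. Qed.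

Lemma circ_dist_refl (p : circle R) : circ_dist p p = 0.
Proof. by rewrite /circ_dist subrr normr0 subr0; apply/min_idPl. Qed.

Lemma sum_circ_dist_le_switches (x : nat -> circle R) (blk : nat -> nat) :
  blk 0 = 0%N -> (forall n, blk n <= blk n.+1)%N ->
  (forall n, blk n.+1 = blk n -> x n.+1 = x n) ->
  forall n, \sum_(i < n) circ_dist (x i) (x i.+1) <= (blk n)%:R / 2.
Proof.
move=> blk0 blk_nondecr blk_const; elim=> [|n IHn]; first by rewrite big_ord0 blk0 mul0r.
rewrite big_ord_recr /=.
have [blk_eq|blk_neq] := eqVneq (blk n.+1) (blk n).
  by rewrite blk_const // circ_dist_refl addr0 blk_eq.
have : (blk n)%:R + 1 <= (blk n.+1)%:R :> R.
  by rewrite natr1 ler_nat ltn_neqAle eq_sym blk_neq blk_nondecr.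
have := circ_dist_le_half (x n) (x n.+1); lra.
Qed.

Lemma nondecreasing_eventually_far (u : nat -> circle R) (a : R) : 0 < a < 1 ->
  (forall n, sval (u n) <= sval (u n.+1)) ->
  exists (b : bool) (T : nat), forall i, (T <= i)%N ->
    Num.min (a / 2) ((1 - a) / 2) <= circ_dist (u i) (circ_proj (if b then a else 0)).
Proof.
move=> /andP[a0 a1] u_nondecr.
pose y i := sval (u i); set e := Num.min (a / 2) ((1 - a) / 2).
have [ea e1a] : e <= a / 2 /\ e <= (1 - a) / 2 by rewrite !ge_min !lexx orbT.
have y_mono : {homo y : m n / (m <= n)%N >-> m <= n}.
  by apply: homo_leq => //; exact: le_trans.
have dist_to (c : R) i : 0 <= c < 1 ->
    circ_dist (u i) (circ_proj c) = Num.min `|y i - c| (1 - `|y i - c|).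
  by move=> c01; rewrite /circ_dist circ_proj_id.
have a01 : 0 <= a < 1 by rewrite (ltW a0).
have z01 : 0 <= (0 : R) < 1 by rewrite lexx ltr01.
have y01 i : 0 <= y i /\ y i < 1 by apply/andP; exact: (svalP (u i)).
have [[T yT]|y_le] := pselect (exists T, (1 + a) / 2 < y T).
  exists true, T => i Ti; have := y_mono _ _ Ti; have [] := y01 i.
  by rewrite dist_to // le_min => *; rewrite ger0_norm; [apply/andP; split|]; lra.
have {}y_le i : y i <= (1 + a) / 2 by rewrite leNgt; apply/negP => ?; apply: y_le; exists i.
have [[T yT]|y_le'] := pselect (exists T, a / 2 < y T).
  exists false, T => i Ti; have := y_mono _ _ Ti; have := y_le i; have [] := y01 i.
  by rewrite dist_to // le_min subr0 => *; rewrite ger0_norm; [apply/andP; split|]; lra.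
exists true, 0%N => i _; have [] := y01 i.
have : y i <= a / 2 by rewrite leNgt; apply/negP => ?; apply: y_le'; exists i.
by rewrite dist_to // le_min => *; rewrite ler0_norm; [apply/andP; split|]; lra.
Qed.
End Circle.

Section InducedMaps.
Variables (R : realType) (F : R -> R).

Lemma induced_circle_map_fixed (c : R) : 0 <= c < 1 -> F c = c ->
  induced_circle_map F (circ_proj c) = circ_proj c.
Proof. by move=> c01 Fc; rewrite /induced_circle_map circ_proj_id // Fc. Qed.

Hypotheses (F_homeo : homeo01 F) (F1 : F 1 = 1).

Lemma homeo01_lt1 (t : R) : 0 <= t < 1 -> 0 <= F t < 1.
Proof.
case: F_homeo => F01 [G [_ [GF _]]] /andP[t0 t1].
have t01 : t \in `[0, 1]%classic by rewrite inE /= in_itv /= t0 ltW.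
have one01 : (1 : R) \in `[0, 1]%classic by rewrite inE /= in_itv /= ler01 lexx.
have := F01 t t01; rewrite inE /= in_itv /= => /andP[-> Ft1] /=.
rewrite lt_neqAle Ft1 andbT; apply/eqP => Ft_eq1.
by move: t1; rewrite -(GF t t01) Ft_eq1 -{1}F1 GF // ltxx.
Qed.

Lemma sval_induced_circle_map (p : circle R) :
  sval (induced_circle_map F p) = F (sval p).
Proof. by rewrite circ_proj_id //; exact/homeo01_lt1/(svalP p). Qed.

Lemma induced_circle_map_ge (a : R) : F 0 = 0 -> F a = a ->
  (forall t, t \in `[0, 1] -> t != 0 -> t != a -> t != 1 -> t < F t) ->
  forall p : circle R, sval p <= sval (induced_circle_map F p).
Proof.
move=> F0 Fa F_gt p; rewrite sval_induced_circle_map.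
have /andP[p0 p1] := svalP p.
have [->|p_neq0] := eqVneq (sval p) 0; first by rewrite F0.
have [->|p_neqa] := eqVneq (sval p) a; first by rewrite Fa.
by apply/ltW/F_gt; rewrite ?in_itv /= ?p0 ?(ltW p1) ?(lt_eqF p1).
Qed.
End InducedMaps.

Section Epochs.
Variable K : nat.

Definition epoch (n : nat) : nat := trunc_log 2 (n %/ K).+1.

Lemma epoch0 : epoch 0 = 0%N.
Proof. by rewrite /epoch div0n trunc_log1. Qed.

Lemma epoch_nondecr (n : nat) : (epoch n <= epoch n.+1)%N.
Proof. by rewrite /epoch leq_trunc_log // ltnS leq_div2r. Qed.

Lemma epoch_mulK_le (n : nat) : (epoch n * K <= n)%N.
Proof.
have epoch_lt : (epoch n < 2 ^ epoch n)%N by apply: ltn_expl.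
have : (2 ^ epoch n <= (n %/ K).+1)%N by apply: trunc_logP.
move=> /(leq_trans epoch_lt); rewrite ltnS => epoch_le.
by rewrite (leq_trans _ (leq_trunc_div n K)) // leq_mul2r epoch_le orbT.
Qed.

Hypothesis K_gt0 : (0 < K)%N.

Lemma epoch_window (k i : nat) :
  (K * (2 ^ k).-1 <= i < K * (2 ^ k.+1).-1)%N -> epoch i = k.
Proof.
move=> /andP[lo hi]; rewrite /epoch; apply: trunc_log_eq => //.
have := leq_div2r K lo; rewrite mulKn // => lo'.
have hi' : (i %/ K < (2 ^ k.+1).-1)%N by rewrite ltn_divLR // mulnC.
have pow_gt0 : (0 < 2 ^ k)%N by rewrite expn_gt0.
rewrite expnS in hi' *; apply/andP; split; lia.
Qed.
End Epochs.

Lemma limn_esup_lt_eventually (R : realType) (u : nat -> R) (c : R) :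
  (limn_esup (fun n => (u n)%:E) < c%:E)%E -> exists N, forall n, (N <= n)%N -> u n < c.
Proof.
rewrite /limn_esup /limf_esup => /ereal_inf_lt [_ [V [N _ NV] <-]] supV_lt.
exists N => n Nn; rewrite -lte_fin; apply: le_lt_trans supV_lt.
by apply: ereal_sup_ubound; exists n => //; exact: NV.
Qed.

Lemma avg_ge_half_on_window (R : realType) (u : nat -> R) (e : R) (s n : nat) :
  (0 < n)%N -> (n <= 2 * (n - s))%N -> 0 <= e -> (forall i, 0 <= u i) ->
  (forall i, (s <= i < n)%N -> e <= u i) -> e / 2 <= n%:R^-1 * \sum_(i < n) u i.
Proof.
move=> n_gt0 n_le e_ge0 u_ge0 u_ge.
have sn : (s <= n)%N by lia.
rewrite -(big_mkord xpredT) (big_cat_nat (leq0n s) sn) /=.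
have head_ge0 : 0 <= \sum_(0 <= i < s) u i by exact: sumr_ge0.
have tail_ge : (n - s)%:R * e <= \sum_(s <= i < n) u i.
  by rewrite mulr_natl -sumr_const_nat; apply: ler_sum_nat.
have n_le' : n%:R <= 2 * (n - s)%:R :> R by rewrite -natrM ler_nat.
have n_ge1 : 1 <= n%:R :> R by rewrite ler1n.
rewrite natrB // in tail_ge n_le'.
rewrite ler_pdivlMl ?ltr0n //; nra.
Qed.

Section Alternating.
Variables (R : realType) (a : R) (K : nat).
Hypothesis K_gt0 : (0 < K)%N.

Definition alternating (n : nat) : circle R :=
  circ_proj (if odd (epoch K n) then a else 0).

Lemma alternating_avg_pseudo_orbit (L : Type) (l : L) (f : L -> circle R -> circle R)
    (delta : R) :
  (forall l', f l' (circ_proj a) = circ_proj a) ->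
  (forall l', f l' (circ_proj 0) = circ_proj 0) ->
  1 < K%:R * delta -> avg_pseudo_orbit (@circ_dist R) f delta alternating.
Proof.
move=> fa f0 K_delta; exists 1%N, (fun _ => l) => n n_gt0.
have f_alt i : f l (alternating i) = alternating i by rewrite /alternating; case: odd.
under eq_bigr do rewrite f_alt.
have alt_const i : epoch K i.+1 = epoch K i -> alternating i.+1 = alternating i.
  by rewrite /alternating => ->.
have sum_le := sum_circ_dist_le_switches (epoch0 K) (epoch_nondecr K) alt_const n.
have epoch_le : (epoch K n)%:R * K%:R <= n%:R :> R by rewrite -natrM ler_nat epoch_mulK_le.
have epoch_ge0 : 0 <= (epoch K n)%:R :> R by [].
have n_ge1 : 1 <= n%:R :> R by rewrite ler1n.
have K_ge1 : 1 <= K%:R :> R by rewrite ler1n.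
have delta_gt0 : 0 < delta by nra.
rewrite mulrC ltr_pdivrMr ?(lt_le_trans ltr01) //; nra.
Qed.

Lemma alternating_far (u : nat -> circle R) : 0 < a < 1 ->
  (forall n, sval (u n) <= sval (u n.+1)) ->
  forall N, exists2 n, (N <= n)%N &
    Num.min (a / 2) ((1 - a) / 2) / 2 <= n%:R^-1 * \sum_(i < n) circ_dist (u i) (alternating i).
Proof.
move=> a01 u_nondecr N; have /andP[a0 a1] := a01.
have [b [T far]] := nondecreasing_eventually_far a01 u_nondecr.
pose k := ((T + N).*2 + b)%N.
have k_odd : odd k = b by rewrite /k oddD odd_double oddb.
have k_lt : (T + N < 2 ^ k)%N.
  by apply: leq_ltn_trans (ltn_expl k (ltnSn 1)); rewrite /k -addnn; lia.
pose s := (K * (2 ^ k).-1)%N; pose n := (K * (2 ^ k.+1).-1)%N.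
have n_ge : ((2 ^ k.+1).-1 <= n)%N by rewrite leq_pmull.
have s_ge : ((2 ^ k).-1 <= s)%N by rewrite leq_pmull.
have n_le : (n <= 2 * (n - s))%N.
  by rewrite /n /s -mulnBr mulnCA leq_mul2l expnS; apply/orP; right; lia.
exists n; first by rewrite expnS in n_ge; lia.
apply: (avg_ge_half_on_window (u := fun i => circ_dist (u i) (alternating i)) (s := s)) => //.
- by rewrite expnS in n_ge; lia.
- by rewrite le_min; apply/andP; split; lra.
- by move=> i; exact: circ_dist_ge0.
move=> i i_win; rewrite /alternating (epoch_window K_gt0 i_win) k_odd.
by apply: far; case/andP: i_win; lia.
Qed.
End Alternating.

Theorem mainTheorem5 (R : realType) (F1 F2 : R -> R) (a : R) :
  homeo01 F1 -> homeo01 F2 ->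
  0 < a < 1 ->
  F1 0 = 0 -> F1 a = a -> F1 1 = 1 ->
  F2 0 = 0 -> F2 a = a -> F2 1 = 1 ->
  (forall t : R, t \in `[0, 1] -> t != 0 -> t != a -> t != 1 ->
     t < F1 t /\ t < F2 t) ->
  ~ average_shadowing_property (@circ_dist R)
      (fun b : bool => if b then induced_circle_map F1 else induced_circle_map F2).
Proof.
move=> F1_homeo F2_homeo a01 F10 F1a F11 F20 F2a F21 F_gt ASP.
set f := (X in average_shadowing_property _ X) in ASP.
have f_ge b p : sval p <= sval (f b p).
  case: b; [apply: (induced_circle_map_ge F1_homeo F11 F10 F1a)
           |apply: (induced_circle_map_ge F2_homeo F21 F20 F2a)];
    by move=> t t01 t0 ta t1; case: (F_gt t t01 t0 ta t1).
have /andP[a0 a1] := a01.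
have a01' : 0 <= a < 1 by rewrite (ltW a0).
have fa b : f b (circ_proj a) = circ_proj a.
  by case: b; apply: induced_circle_map_fixed.
have f0 b : f b (circ_proj 0) = circ_proj 0.
  by case: b; apply: induced_circle_map_fixed; rewrite ?lexx ?ltr01.
set e := Num.min (a / 2) ((1 - a) / 2).
have e_gt0 : 0 < e by rewrite lt_min; apply/andP; split; lra.
have [delta delta_gt0 shadow] := ASP (e / 2) ltac:(lra).
pose K := (Num.truncn delta^-1).+1.
have K_delta : 1 < K%:R * delta.
  by rewrite -ltr_pdivrMr // div1r truncnS_gt.
have [z [sigma]] := shadow _ (alternating_avg_pseudo_orbit (ltn0Sn _) true fa f0 K_delta).
move=> /limn_esup_lt_eventually [N avg_lt].
have [n Nn avg_ge] :=
  alternating_far (K := K) (u := ifs_orbit f sigma z) (ltn0Sn _) a01 (fun n => f_ge _ _) N.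
by have := avg_lt n Nn; rewrite ltNge avg_ge.
Qed.
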